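(* Let $N\ge 2$. There exists a lower triangular matrix $H\in\mathbb{R}^{(N-1)\times(N-1)}$ with entries $h_{k,j}$ such that for every $d\ge 1$, every nonexpansive $\mathbb{T}\colon\mathbb{R}^d\to\mathbb{R}^d$ and every $y_0\in\mathbb{R}^d$: (i) the iterates of the Optimal Halpern Method $y_{k+1}=\frac{k+1}{k+2}\mathbb{T}y_k+\frac{1}{k+2}y_0$, $k=0,\dots,N-2$, satisfy $y_{k+1}=y_k-\sum_{j=0}^k h_{k+1,j+1}(y_j-\mathbb{T}y_j)$ for $k=0,\dots,N-2$; and (ii) the iterates of the Dual Optimal Halpern Method $y_{k+1}=y_k+\frac{N-k-1}{N-k}(\mathbb{T}y_k-\mathbb{T}y_{k-1})$, $k=0,\dots,N-2$ (with $\mathbb{T}y_{-1}:=y_0$), satisfy $y_{k+1}=y_k-\sum_{j=0}^k (H^{A})_{k+1,j+1}(y_j-\mathbb{T}y_j)$ for $k=0,\dots,N-2$, where $H^{A}$ denotes the anti-diagonal transpose $(H^A)_{k,j}=H_{N-j,N-k}$. That is, the two methods are H-duals of each other.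
   Context: Nonexpansive means $1$-Lipschitz. Indices of $(N-1)\times(N-1)$ matrices run over $1,\dots,N-1$. *)

From mathcomp Require Import all_boot all_order all_algebra.
From mathcomp Require Import reals.
Set Implicit Arguments. Unset Strict Implicit. Unset Printing Implicit Defensive.
Import Order.TTheory GRing.Theory Num.Theory.
Local Open Scope ring_scope.

Definition enorm (R : realType) (d : nat) (x : 'rV[R]_d) : R :=
  Num.sqrt (\sum_(i < d) x 0 i ^+ 2).

Definition nonexpansive (R : realType) (d : nat) (T : 'rV[R]_d -> 'rV[R]_d) : Prop :=
  forall x y : 'rV[R]_d, enorm (T x - T y) <= enorm (x - y).

Fixpoint ohm (R : realType) (d : nat) (T : 'rV[R]_d -> 'rV[R]_d) (y0 : 'rV[R]_d)
    (k : nat) : 'rV[R]_d :=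
  match k with
  | 0 => y0
  | k'.+1 => (k'.+1%:R / k'.+2%:R) *: T (ohm T y0 k') + (1 / k'.+2%:R) *: y0
  end.

(* Dual Optimal Halpern Method, auxiliary: returns (y_k, T y_{k-1}) with T y_{-1} := y0. *)
Fixpoint dohm_aux (R : realType) (d : nat) (N : nat) (T : 'rV[R]_d -> 'rV[R]_d)
    (y0 : 'rV[R]_d) (k : nat) : 'rV[R]_d * 'rV[R]_d :=
  match k with
  | 0 => (y0, y0)
  | k'.+1 =>
      let yk := (dohm_aux N T y0 k').1 in
      let Tprev := (dohm_aux N T y0 k').2 in
      (yk + ((N - k' - 1)%:R / (N - k')%:R) *: (T yk - Tprev), T yk)
  end.

Definition dohm (R : realType) (d : nat) (N : nat) (T : 'rV[R]_d -> 'rV[R]_d)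
    (y0 : 'rV[R]_d) (k : nat) : 'rV[R]_d := (dohm_aux N T y0 k).1.

From mathcomp Require Import all_boot all_order all_algebra.
From mathcomp Require Import reals ring lra zify.
Import Order.TTheory GRing.Theory Num.Theory.
Local Open Scope ring_scope.

(* Both identities are algebraic consequences of the recursions alone; writing
   g_j := y_j - T y_j for the residuals, they follow from closed forms:
     OHM:   y_k = y_0 - (1/(k+1)) sum_{j<k} (j+1) g_j,
     DOHM:  y_k - T y_{k-1} = (N-k) sum_{j<k} g_j / ((N-j-1)(N-j)),
   the latter because w_k := (y_k - T y_{k-1})/(N-k) satisfies
   w_{k+1} = w_k + g_k/((N-k-1)(N-k)). Subtracting consecutive closed forms
   gives the rows of H and of its anti-diagonal transpose. *)

(* [ohm_coef R k j] is the paper's h_{k+1,j+1}. *)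
Definition ohm_coef (R : fieldType) (k j : nat) : R :=
  if (j < k)%N then - (j.+1%:R / (k.+1%:R * k.+2%:R))
  else if j == k then k.+1%:R / k.+2%:R else 0.

Definition ohm_matrix (R : fieldType) (n : nat) : 'M[R]_n :=
  \matrix_(i, j) ohm_coef R i j.

Lemma ohm_matrix_lower (R : fieldType) (n : nat) (i j : 'I_n) :
  (i < j)%N -> ohm_matrix R n i j = 0.
Proof. by move=> lt_ij; rewrite mxE /ohm_coef ltnNge (ltnW lt_ij) gtn_eqF. Qed.

Lemma ohm_coef_rev (R : fieldType) (n j k : nat) : (j <= k)%N -> (k <= n)%N ->
  ohm_coef R (n - j) (n - k) =
  if (j < k)%N then - ((n.+1%:R - k%:R) / ((n.+1%:R - j%:R) * (n.+2%:R - j%:R)))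
  else (n.+1%:R - k%:R) / (n.+2%:R - k%:R).
Proof.
move=> le_jk le_kn; rewrite /ohm_coef.
case: (ltnP j k) => [lt_jk | le_kj].
  rewrite ifT; last by lia.
  by rewrite -!subSn ?natrB //; lia.
have -> : j = k by apply/eqP; rewrite eqn_leq le_jk.
by rewrite ltnn eqxx -!subSn ?natrB //; lia.
Qed.

Section Iterates.
Variables (R : realType) (d : nat) (T : 'rV[R]_d -> 'rV[R]_d) (y0 : 'rV[R]_d).

Local Notation residual y := (y - T y).

Lemma ohmE (k : nat) :
  ohm T y0 k =
  y0 - k.+1%:R^-1 *: \sum_(j < k) j.+1%:R *: residual (ohm T y0 j).
Proof.
elim: k => [|k IH]; first by rewrite big_ord0 scaler0 subr0.
rewrite big_ord_recr /=.
move: IH; set y := ohm T y0 k; set S := \sum_(j < k) _ => IH.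
move: (T y) => Ty; rewrite {}IH.
have k_ge0 : (0 : R) <= k%:R by [].
apply/rowP => i; rewrite !mxE.
field; apply/andP; split; apply/eqP => ?; lra.
Qed.

Lemma ohm_step (k : nat) :
  ohm T y0 k.+1 =
  ohm T y0 k - \sum_(j < k.+1) ohm_coef R k j *: residual (ohm T y0 j).
Proof.
rewrite !ohmE !big_ord_recr /= /ohm_coef ltnn eqxx.
set S := \sum_(j < k) _; move: (T (ohm T y0 k)) => Ty.
have -> : \sum_(j < k) ohm_coef R k j *: residual (ohm T y0 j) =
          - (k.+1%:R * k.+2%:R)^-1 *: S.
  rewrite /S scaler_sumr; apply: eq_bigr => j _.
  by rewrite /ohm_coef ltn_ord scalerA mulNr mulrC.
have k_ge0 : (0 : R) <= k%:R by [].
apply/rowP => i; rewrite !mxE.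
field; apply/andP; split; apply/eqP => ?; lra.
Qed.

Variable n : nat.
Local Notation N := n.+2.

Lemma dohmS (k : nat) : (k <= n.+1)%N ->
  dohm N T y0 k.+1 =
  dohm N T y0 k + ((n.+1%:R - k%:R) / (n.+2%:R - k%:R)) *:
    (T (dohm N T y0 k) - (dohm_aux N T y0 k).2).
Proof. by move=> le_kn; rewrite /dohm /= subnAC subn1 !natrB // leqW. Qed.

Lemma dohm_sub_prevE (k : nat) : (k <= n.+1)%N ->
  dohm N T y0 k - (dohm_aux N T y0 k).2 =
  (n.+2%:R - k%:R) *: \sum_(j < k)
     ((n.+1%:R - j%:R) * (n.+2%:R - j%:R))^-1 *: residual (dohm N T y0 j).
Proof.
elim: k => [|k IH] le_kn; first by rewrite big_ord0 scaler0 subrr.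
move: (IH (ltnW le_kn)); rewrite dohmS 1?ltnW // big_ord_recr.
change (nat_of_ord (@ord_max k)) with k.
change (dohm_aux N T y0 k.+1).2 with (T (dohm N T y0 k)).
set y := dohm N T y0 k; set S := \sum_(j < k) _ => gapE.
have -> : (dohm_aux N T y0 k).2 = y - (n.+2%:R - k%:R) *: S.
  by rewrite -gapE opprB addrC subrK.
move: (T y) => Ty.
have le_kn' : (k%:R : R) <= n%:R by rewrite ler_nat -ltnS.
apply/rowP => i; rewrite !mxE.
field; repeat (apply/andP; split); apply/eqP => eq0; clear -le_kn' eq0; lra.
Qed.

Lemma dohm_step (k : nat) : (k <= n)%N ->
  dohm N T y0 k.+1 =
  dohm N T y0 k - \sum_(j < k.+1)
     ohm_coef R (n - j) (n - k) *: residual (dohm N T y0 j).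
Proof.
move=> le_kn; move: (dohm_sub_prevE _ (leqW le_kn)).
rewrite dohmS ?leqW // big_ord_recr.
change (nat_of_ord (@ord_max k)) with k.
rewrite ohm_coef_rev // ltnn.
set y := dohm N T y0 k; set S := \sum_(j < k) _ => gapE.
have -> : \sum_(j < k) ohm_coef R (n - j) (n - k) *: residual (dohm N T y0 j) =
          - (n.+1%:R - k%:R) *: S.
  rewrite /S scaler_sumr; apply: eq_bigr => j _.
  by rewrite ohm_coef_rev ?ltn_ord // 1?ltnW // scalerA mulNr.
have -> : (dohm_aux N T y0 k).2 = y - (n.+2%:R - k%:R) *: S.
  by rewrite -gapE opprB addrC subrK.
move: (T y) => Ty.
have le_kn' : (k%:R : R) <= n%:R by rewrite ler_nat.
apply/rowP => i; rewrite !mxE.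
field; repeat (apply/andP; split); apply/eqP => eq0; clear -le_kn' eq0; lra.
Qed.

End Iterates.

Theorem proposition5p1 (R : realType) (N : nat) (hN : (2 <= N)%N) :
  exists H : 'M[R]_(N - 1),
    (forall i j : 'I_(N - 1), (i < j)%N -> H i j = 0) /\
    forall (d : nat), (1 <= d)%N ->
    forall (T : 'rV[R]_d -> 'rV[R]_d), nonexpansive T ->
    forall y0 : 'rV[R]_d,
      (forall k : 'I_(N - 1),
         ohm T y0 k.+1 =
           ohm T y0 k -
           \sum_(j < N - 1 | (j <= k)%N)
              H k j *: (ohm T y0 j - T (ohm T y0 j))) /\
      (forall k : 'I_(N - 1),
         dohm N T y0 k.+1 =
           dohm N T y0 k -
           \sum_(j < N - 1 | (j <= k)%N)
              H (rev_ord j) (rev_ord k) *: (dohm N T y0 j - T (dohm N T y0 j))).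
Proof.
case: N hN => [|[|n]] // _.
exists (ohm_matrix R n.+1); split; first exact: ohm_matrix_lower.
move=> d _ T _ y0; split=> k; under eq_bigr do rewrite mxE.
  rewrite -(big_ord_widen _
    (fun j => ohm_coef R k j *: (ohm T y0 j - T (ohm T y0 j))) (ltn_ord k)).
  exact: ohm_step.
have rev_ordE (j : 'I_(n.+2 - 1)) : rev_ord j = (n - j)%N :> nat.
  by rewrite /=; lia.
under eq_bigr do rewrite !rev_ordE.
rewrite -(big_ord_widen _ (fun j => ohm_coef R (n - j) (n - k) *:
  (dohm n.+2 T y0 j - T (dohm n.+2 T y0 j))) (ltn_ord k)).
by apply: dohm_step; rewrite -ltnS.
Qed.
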